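(* For every $n$-variable Boolean function $f$ it holds that $NN(f)\le(1+o(1))\frac{2^{n+2}}{n}$, where $o(1)$ denotes a quantity depending only on $n$ that tends to $0$ as $n\to\infty$.
   Context: For a Boolean function $f:\{0,1\}^n\to\{0,1\}$, a nearest neighbor representation is a pair of disjoint sets $(P,N)$ of points of $\mathbb R^n$ such that for every $a\in\{0,1\}^n$: if $f(a)=1$, there is $b\in P$ with $d(a,b)<d(a,c)$ for all $c\in N$; if $f(a)=0$, there is $b\in N$ with $d(a,b)<d(a,c)$ for all $c\in P$ ($d$ = Euclidean distance). $NN(f)$ is the minimum of $|P\cup N|$ over all nearest neighbor representations of $f$. *)

From HB Require Import structures.
From mathcomp Require Import all_boot all_order all_algebra.
From mathcomp Require Import all_classical all_reals all_analysis.
From mathcomp Require Import Rstruct Rstruct_topology.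
From Stdlib Require Import Rdefinitions.

Set Implicit Arguments.
Unset Strict Implicit.
Unset Printing Implicit Defensive.
Import Order.TTheory GRing.Theory Num.Theory.
Local Open Scope ring_scope.

Definition cube (n : nat) := {ffun 'I_n -> bool}.

Definition pt (n : nat) := 'rV[R]_n.

Definition emb (n : nat) (a : cube n) : pt n := \row_i ((a i : nat)%:R).

Definition dist (n : nat) (x y : pt n) : R :=
  Num.sqrt (\sum_(i < n) (x ord0 i - y ord0 i) ^+ 2).

(* (P, N) is a nearest neighbor representation of f.  Finite sets of points are
   given as duplicate-free lists; uniq (P ++ N) also encodes disjointness. *)
Definition is_NNrep (n : nat) (f : cube n -> bool) (P N : seq (pt n)) : Prop :=
  uniq (P ++ N) /\
  forall a : cube n,
    (f a -> exists2 b, b \in P & forall c, c \in N -> dist (emb a) b < dist (emb a) c) /\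
    (~~ f a -> exists2 b, b \in N & forall c, c \in P -> dist (emb a) b < dist (emb a) c).

Definition NN_size_pred (n : nat) (f : cube n -> bool) : pred nat :=
  fun m => `[< exists P N, is_NNrep f P N /\ size (P ++ N) = m >].

Lemma emb_inj n : injective (@emb n).
Proof.
move=> a b /matrixP H; apply/ffunP => i; have := H ord0 i; rewrite !mxE.
by case: (a i); case: (b i) => //= /eqP; rewrite ?oner_eq0 // eq_sym oner_eq0.
Qed.

Lemma dist_pos n (a b : cube n) : a != b -> 0 < dist (emb a) (emb b).
Proof.
move=> ab; rewrite sqrtr_gt0 lt_neqAle sumr_ge0 ?andbT; last by move=> i _; exact: sqr_ge0.
have [i Hi] : exists i, a i != b i.
  by apply/existsP; apply: contraNT ab => /existsPn H; apply/eqP/ffunP => i; apply/eqP/negbNE/H.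
rewrite eq_sym psumr_eq0; last by move=> j _; exact: sqr_ge0.
apply/allPn; exists i; first exact: mem_index_enum.
rewrite sqrf_eq0 !mxE subr_eq0.
by move: Hi; case: (a i); case: (b i) => //= _; rewrite ?oner_eq0 // eq_sym oner_eq0.
Qed.

Lemma dist_refl n (x : pt n) : dist x x = 0.
Proof. by rewrite /dist big1 ?sqrtr0 // => i _; rewrite subrr expr0n. Qed.

Lemma NN_exists n (f : cube n -> bool) : exists m, NN_size_pred f m.
Proof.
pose P := [seq emb a | a <- enum [pred a | f a]].
pose N := [seq emb a | a <- enum [pred a | ~~ f a]].
exists (size (P ++ N)); apply/asboolP; exists P, N; split => //; split.
  rewrite -map_cat map_inj_uniq; last exact: emb_inj.
  rewrite cat_uniq !enum_uniq /= andbT; apply/hasPn => x.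
  by rewrite !mem_enum !inE => Hx; apply/negP => Hy; move: Hx; rewrite Hy.
move=> a; split=> Ha.
  exists (emb a); first by apply: map_f; rewrite mem_enum.
  move=> c /mapP [a' Ha' ->]; rewrite dist_refl dist_pos //.
  by apply/negP => /eqP E; move: Ha'; rewrite mem_enum inE -E Ha.
exists (emb a); first by apply: map_f; rewrite mem_enum.
move=> c /mapP [a' Ha' ->]; rewrite dist_refl dist_pos //.
by apply/negP => /eqP E; move: Ha'; rewrite mem_enum inE -E (negbTE Ha).
Qed.

Definition NN (n : nat) (f : cube n -> bool) : nat := ex_minn (NN_exists f).

From HB Require Import structures.
From mathcomp Require Import all_boot all_order all_algebra.
From mathcomp Require Import all_classical all_reals all_analysis.
From mathcomp Require Import Rstruct Rstruct_topology.
From Stdlib Require Import Rdefinitions.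
From mathcomp Require Import ring lra zify.

(* Let h_1, ..., h_n list the nonzero vectors of F_2^m, where 2^m <= n + 1 < 2^(m+1), padded
   with zero columns, and let C be the kernel of the syndrome a |-> sum_{a_i = 1} h_i. Every
   point outside C has exactly one neighbour in C, and the translates of C realising the 2^m
   syndromes are disjoint, so |C| <= 2^(n-m) < 2^(n+1)/n.
   Around each codeword c place c itself, labelled f(c), and a twin labelled ~f(c): c with
   each coordinate i moved by δ = 1/(8n) towards the neighbour c + e_i if f(c + e_i) <> f(c)
   and away from it otherwise. The nearest of these 2|C| points to c is c; to a = c + e_i it
   is c or the twin according as f(a) = f(c) or not (squared distances 1 and 1 -+ 2δ + nδ^2),
   all other points being at squared distance at least 2(1 - 2δ). Hence
   NN(f) <= 2|C| <= 2^(n+2)/n, and the o(1) term can be taken to be 0. *)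

Set Implicit Arguments.
Unset Strict Implicit.
Unset Printing Implicit Defensive.
Import Order.TTheory GRing.Theory Num.Theory.
Local Open Scope ring_scope.

Lemma NN_le n (f : cube n -> bool) P N : is_NNrep f P N -> (NN f <= size (P ++ N))%nat.
Proof. by move=> rep; rewrite /NN; case: ex_minnP => k _; apply; apply/asboolP; exists P, N. Qed.

Lemma NN_le_card n (f : cube n -> bool) (I : finType) (S : {set I})
    (p : I -> pt n) (label : I -> bool) :
  {in S &, injective p} ->
  (forall a, exists2 i, i \in S & label i = f a /\
     forall j, j \in S -> j != i -> dist (emb a) (p i) < dist (emb a) (p j)) ->
  (NN f <= #|S|)%nat.
Proof.
move=> p_inj nearest; set s := enum S.
pose P := [seq p i | i <- s & label i].
pose N := [seq p i | i <- s & predC label i].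
have <- : size (P ++ N) = #|S| by rewrite size_cat !size_map !size_filter count_predC cardE.
apply: NN_le; split.
  have s_perm : perm_eq ([seq i <- s | label i] ++ [seq i <- s | predC label i]) s.
    by rewrite perm_filterC.
  rewrite -map_cat map_inj_in_uniq ?(perm_uniq s_perm) ?enum_uniq //.
  by apply: (sub_in2 _ p_inj) => i; rewrite (perm_mem s_perm) mem_enum.
have selected b i : i \in S -> label i = b ->
  p i \in [seq p j | j <- s & if b then label j else ~~ label j].
  by move=> iS <-; apply: map_f; rewrite mem_filter mem_enum iS andbT; case: (label i).
have rival b c : c \in [seq p j | j <- s & if b then ~~ label j else label j] ->
  exists2 j, j \in S & label j != b /\ c = p j.
  case/mapP=> j; rewrite mem_filter mem_enum => /andP[lj jS] ->.
  by exists j => //; split=> //; case: b lj; case: (label j).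
move=> a; have [i iS [lab_i near_i]] := nearest a.
have beats b j : j \in S -> label j != b -> label i = b -> dist (emb a) (p i) < dist (emb a) (p j).
  by move=> jS lab_j lab_ib; apply: near_i => //; apply: contraNneq lab_j => ->; exact/eqP.
split=> [fa | /negbTE fa]; exists (p i).
- by apply: (selected true) => //; rewrite lab_i.
- by move=> _ /(rival true)[j jS [lab_j ->]]; apply: (beats true) => //; rewrite lab_i.
- by apply: (selected false) => //; rewrite lab_i.
- by move=> _ /(rival false)[j jS [lab_j ->]]; apply: (beats false) => //; rewrite lab_i.
Qed.

Definition ham n (a b : cube n) : nat := #|[set i | a i != b i]|.

Definition flip n (a : cube n) (j : 'I_n) : cube n :=
  [ffun i => if i == j then ~~ a i else a i].

Lemma flipK n (j : 'I_n) : involutive (fun a : cube n => flip a j).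
Proof. by move=> a; apply/ffunP => i; rewrite !ffunE; case: eqP => // ->; rewrite negbK. Qed.

Lemma flip_inj n (j : 'I_n) : injective (fun a : cube n => flip a j).
Proof. exact: inv_inj (flipK j). Qed.

Lemma ham_eq0 n (a b : cube n) : (ham a b == 0%nat) = (a == b).
Proof.
rewrite /ham cards_eq0; apply/eqP/eqP => [ab | ->]; last by apply/setP => i; rewrite !inE eqxx.
by apply/ffunP => i; apply/eqP/negPn; have := finset.in_set0 i; rewrite -ab inE => /negbT.
Qed.

Lemma ham_eq1 n (a b : cube n) : ham a b = 1%nat -> exists j, b = flip a j.
Proof.
move/eqP/cards1P=> [j dj]; exists j; apply/ffunP => i; rewrite ffunE.
move/setP/(_ i): dj; rewrite !inE.
by case: (i =P j) => [-> | _]; case: (a _); case: (b _).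
Qed.

Lemma ham_sym n (a b : cube n) : ham a b = ham b a.
Proof.
rewrite /ham (_ : [set i | a i != b i] = [set i | b i != a i]) //.
by apply/setP => i; rewrite !inE eq_sym.
Qed.

Lemma ham_flip n (a : cube n) j : ham a (flip a j) = 1%nat.
Proof.
rewrite /ham (_ : [set i | a i != flip a j i] = [set j]) ?cards1 //.
by apply/setP => i; rewrite !inE ffunE; case: (i =P j); case: (a i).
Qed.

Definition unique_cover n (C : {set cube n}) : Prop :=
  forall a, a \notin C -> exists2 c, c \in C &
    ham a c = 1%nat /\ forall c', c' \in C -> ham a c' = 1%nat -> c' = c.

Section Syndrome.

Variables (V : finZmodType) (n : nat) (h : 'I_n -> V).
Hypothesis addVV : forall x : V, x + x = 0.
Hypothesis h_inj : {in [pred i | h i != 0] &, injective h}.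
Hypothesis h_onto : forall s, s != 0 -> exists i, h i = s.

Definition syndrome (a : cube n) : V := \sum_(i | a i) h i.

Definition code : {set cube n} := [set a | syndrome a == 0].

Lemma oppV (x : V) : - x = x.
Proof. by rewrite -[LHS]add0r -(addVV x) addrK. Qed.

Lemma syndrome_flip a j : syndrome (flip a j) = syndrome a + h j.
Proof.
rewrite /syndrome big_mkcond [in RHS]big_mkcond (bigD1 j) //= [in RHS](bigD1 j) //=.
have -> : \sum_(i | i != j) (if flip a j i then h i else 0) =
          \sum_(i | i != j) (if a i then h i else 0).
  by apply: eq_bigr => i /negbTE ij; rewrite ffunE ij.
rewrite ffunE eqxx; case: (a j) => /=; rewrite add0r.
  by rewrite addrAC addVV add0r.
by rewrite addrC.
Qed.

Lemma flip_in_code a k : (flip a k \in code) = (h k == syndrome a).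
Proof. by rewrite inE syndrome_flip addr_eq0 oppV eq_sym. Qed.

Lemma code_unique_cover : unique_cover code.
Proof.
move=> a; rewrite inE => sa; have [j hj] := h_onto sa.
exists (flip a j); first by rewrite flip_in_code hj.
split=> [|c cC]; first exact: ham_flip.
case/ham_eq1=> k ck; move: cC; rewrite ck flip_in_code => /eqP hk.
by congr flip; apply: h_inj; rewrite ?inE ?hk ?hj.
Qed.

Lemma card_code : (#|code| * #|V| <= expn 2 n)%nat.
Proof.
pose shift (x : cube n * V) :=
  if [pick i | h i == x.2] is Some j then flip x.1 j else x.1.
have syndrome_shift c s : c \in code -> syndrome (shift (c, s)) = s.
  rewrite inE => /eqP sc; rewrite /shift; case: pickP => [j /eqP hj | none] /=.
    by rewrite syndrome_flip sc add0r.
  rewrite sc; apply/eqP; rewrite eq_sym; apply: contraT => /h_onto[i hi].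
  by have := none i; rewrite hi eqxx.
have shift_inj : {in finset.setX code [set: V] &, injective shift}.
  move=> [c s] [c' s']; rewrite !finset.in_setX !finset.in_setT /= !andbT => cC c'C E.
  have ss' : s = s' by rewrite -(syndrome_shift c s cC) -(syndrome_shift c' s' c'C) E.
  subst s'; move: E; rewrite /shift /=.
  by case: pickP => [j _ /flip_inj | _] ->.
rewrite -cardsT -cardsX -(card_in_imset shift_inj).
apply: leq_trans (max_card _) _.
by rewrite card_ffun card_bool card_ord.
Qed.

End Syndrome.

Definition nonzero_F2 m : seq 'rV['F_2]_m := enum (predC1 0).

(* Past the [2 ^ m - 1] nonzero vectors, [nth] returns zero columns. *)
Definition hamming_column m n (i : 'I_n) : 'rV['F_2]_m := nth 0 (nonzero_F2 m) i.

Lemma F2_addrr m (x : 'rV['F_2]_m) : x + x = 0.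
Proof. by apply/matrixP => i j; rewrite !mxE; apply: addrr_pchar2; apply: pchar_Fp. Qed.

Lemma size_nonzero_F2 m : size (nonzero_F2 m) = (expn 2 m).-1.
Proof. by rewrite -cardE cardC1 card_mx card_Fp // mul1n. Qed.

Lemma hamming_column_inj m n :
  {in [pred i | hamming_column m i != 0] &, injective (@hamming_column m n)}.
Proof.
have in_range (i : 'I_n) : hamming_column m i != 0 ->
    (i < size (nonzero_F2 m))%nat.
  by apply: contraR; rewrite -leqNgt => big; rewrite /hamming_column nth_default.
move=> i k /in_range ilt /in_range klt eq_ik; apply: val_inj.
by apply/eqP; rewrite -(nth_uniq 0 ilt klt) ?enum_uniq //; apply/eqP.
Qed.

Lemma hamming_column_onto m n : (expn 2 m <= n.+1)%nat ->
  forall s, s != 0 -> exists i : 'I_n, hamming_column m i = s.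
Proof.
move=> mn s s0; have s_in : s \in nonzero_F2 m by rewrite mem_enum inE.
have lt_n : (index s (nonzero_F2 m) < n)%nat.
  have := index_mem s (nonzero_F2 m); rewrite s_in size_nonzero_F2 => /leq_trans; apply.
  by rewrite -ltnS prednK ?expn_gt0.
by exists (Ordinal lt_n); rewrite /hamming_column nth_index.
Qed.

Definition sqdist n (x y : pt n) : R := \sum_(i < n) (x ord0 i - y ord0 i) ^+ 2.

Lemma dist_lt_sqdist n (x y z : pt n) : sqdist x y < sqdist x z -> dist x y < dist x z.
Proof.
move=> lt_yz; rewrite /dist ltr_sqrt //.
by apply: le_lt_trans lt_yz; apply: sumr_ge0 => i _; apply: sqr_ge0.
Qed.

Lemma ham_sum n (a c : cube n) : (ham a c)%:R = \sum_(i < n) ((a i != c i)%:R : R).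
Proof. by rewrite /ham -sum1dep_card natr_sum big_mkcond; apply: eq_bigr => i _; case: ifP. Qed.

Lemma sqdist_emb n (a c : cube n) : sqdist (emb a) (emb c) = (ham a c)%:R.
Proof.
by rewrite ham_sum; apply: eq_bigr => i _; rewrite !mxE; case: (a i); case: (c i) => /=; ring.
Qed.

Lemma sqdist_refl m (x : pt m) : sqdist x x = 0.
Proof. by rewrite /sqdist big1 // => i _; rewrite subrr expr0n. Qed.

Section Twins.

Variables (n : nat) (f : cube n -> bool) (δ : R).

Definition nudge (x t : bool) : R :=
  if x then (if t then 1 - δ else 1 + δ) else (if t then δ else - δ).

Definition twin (c : cube n) : pt n := \row_i nudge (c i) (f (flip c i) != f c).

Definition site (x : cube n * bool) : pt n := if x.2 then emb x.1 else twin x.1.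

Lemma sqr_sub_nudge (x y t : bool) : ((x : nat)%:R - nudge y t) ^+ 2 =
  if x == y then δ ^+ 2 else if t then (1 - δ) ^+ 2 else (1 + δ) ^+ 2.
Proof. by case: x; case: y; case: t => /=; ring. Qed.

Lemma sqdist_twin a c : sqdist (emb a) (twin c) = \sum_(i < n)
  (if a i == c i then δ ^+ 2 else if f (flip c i) != f c then (1 - δ) ^+ 2 else (1 + δ) ^+ 2).
Proof. by apply: eq_bigr => i _; rewrite !mxE sqr_sub_nudge. Qed.

Lemma sqdist_twin_self c : sqdist (emb c) (twin c) = n%:R * δ ^+ 2.
Proof.
rewrite sqdist_twin; under eq_bigr do rewrite eqxx.
by rewrite sumr_const card_ord mulr_natl.
Qed.

Lemma sqdist_twin_flip c j : sqdist (emb (flip c j)) (twin c) =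
  1 + (if f (flip c j) != f c then - 2 * δ else 2 * δ) + n%:R * δ ^+ 2.
Proof.
rewrite sqdist_twin (bigD1 j) //= ffunE eqxx.
have -> : (~~ c j == c j) = false by case: (c j).
have -> : \sum_(i | i != j) (if flip c j i == c i then δ ^+ 2 else
     if f (flip c i) != f c then (1 - δ) ^+ 2 else (1 + δ) ^+ 2) = (n%:R - 1) * δ ^+ 2.
  apply: (addrI (δ ^+ 2)); rewrite [RHS]addrC mulrBl mul1r subrK.
  rewrite [X in X = _](_ : _ = \sum_(i < n) δ ^+ 2).
    by rewrite sumr_const card_ord mulr_natl.
  rewrite [RHS](bigD1 j) //=; congr (_ + _).
  by apply: eq_bigr => i ij; rewrite ffunE (negbTE ij) eqxx.
by case: (_ != _); ring.
Qed.

Lemma ham_le_sqdist_site a x : 0 <= δ ->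
  (1 - 2 * δ) * (ham a x.1)%:R <= sqdist (emb a) (site x).
Proof.
case: x => c [] /= δ_ge0.
  by rewrite sqdist_emb; have := ler0n R (ham a c); nra.
rewrite sqdist_twin ham_sum mulr_sumr; apply: ler_sum => i _.
by case: (a i == c i) => /=; [rewrite mulr0 sqr_ge0 | case: (_ != _); rewrite mulr1; nra].
Qed.

Lemma nat_neq_nudge (x y t : bool) : 0 < δ < 1 / 2 -> (x : nat)%:R != nudge y t.
Proof. by move=> /andP[? ?]; case: x; case: y; case: t => /=; apply/eqP; lra. Qed.

Lemma nudge_inj (x y t t' : bool) : 0 < δ < 1 / 2 -> nudge x t = nudge y t' -> x = y.
Proof. by move=> /andP[? ?]; case: x; case: y; case: t; case: t' => //= ?; exfalso; lra. Qed.

Hypotheses (n_gt0 : (0 < n)%nat) (δ_gt0 : 0 < δ) (nδ_lt : n%:R * δ < 1 / 4).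

Lemma δ_lt : δ < 1 / 4.
Proof. by apply: le_lt_trans nδ_lt; apply: ler_peMl; [exact: ltW | rewrite ler1n]. Qed.

Lemma nδ2_lt : n%:R * δ ^+ 2 < δ / 4.
Proof.
rewrite expr2 mulrA; move: nδ_lt; rewrite -(ltr_pM2r δ_gt0) mul1r => /lt_le_trans; apply.
by rewrite mulrC.
Qed.

Lemma nδ2_gt0 : 0 < n%:R * δ ^+ 2.
Proof. by rewrite mulr_gt0 ?ltr0n ?exprn_gt0. Qed.

Lemma site_inj : injective site.
Proof.
move=> [c b] [c' b'] E.
have δ_bounds : 0 < δ < 1 / 2 by rewrite δ_gt0 (lt_trans δ_lt) //; lra.
have coord i : c i = c' i /\ b = b'.
  move: (congr1 (fun p : pt n => p ord0 i) E); clear E.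
  case: b; case: b' => /=; rewrite !mxE => eq_i.
  - by split=> //; move/eqP: eq_i; rewrite eqr_nat; case: (c i); case: (c' i).
  - by have /eqP := nat_neq_nudge (c i) (c' i) (f (flip c' i) != f c') δ_bounds.
  - by have /eqP := nat_neq_nudge (c' i) (c i) (f (flip c i) != f c) δ_bounds; rewrite eq_i.
  - by split=> //; apply: nudge_inj eq_i.
have [_ ->] := coord (Ordinal n_gt0).
by congr pair; apply/ffunP => i; case: (coord i).
Qed.

Lemma sqdist_site_gt0 a x : x != (a, true) -> 0 < sqdist (emb a) (site x).
Proof.
have := δ_lt; have := δ_gt0 => δ0 δ1.
case: x => c b; have [-> | ca] := eqVneq c a.
  by case: b; rewrite ?eqxx //= sqdist_twin_self => _; exact: nδ2_gt0.
have ham_ge1 : 1 <= (ham a c)%:R :> R by rewrite ler1n lt0n ham_eq0 eq_sym.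
by have := ham_le_sqdist_site a (c, b) (ltW δ_gt0); rewrite /=; nra.
Qed.

Lemma sqdist_site_far a x : (2 <= ham a x.1)%nat -> 2 * (1 - 2 * δ) <= sqdist (emb a) (site x).
Proof.
move=> far; have := δ_lt; have := ham_le_sqdist_site a x (ltW δ_gt0).
have : 2 <= (ham a x.1)%:R :> R by rewrite ler_nat.
nra.
Qed.

Lemma sqdist_site_flip c j b : sqdist (emb (flip c j)) (site (c, b)) =
  if b then 1 else 1 + (if f (flip c j) != f c then - 2 * δ else 2 * δ) + n%:R * δ ^+ 2.
Proof. by case: b; rewrite /= ?sqdist_twin_flip // sqdist_emb ham_sym ham_flip. Qed.

Lemma sqdist_site_neighbour c j : let a := flip c j in let b := f a == f c in
  sqdist (emb a) (site (c, b)) < sqdist (emb a) (site (c, ~~ b)) /\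
  sqdist (emb a) (site (c, b)) < 2 * (1 - 2 * δ).
Proof.
rewrite /= !sqdist_site_flip.
have := δ_lt; have := δ_gt0; have := nδ2_lt; have := nδ2_gt0.
by case: (f (flip c j) == f c) => /= *; split; lra.
Qed.

Variable C : {set cube n}.
Hypothesis C_cover : unique_cover C.

Lemma nearest_site a : exists2 x, x \in finset.setX C [set: bool] &
  (x.2 == f x.1) = f a /\ forall y, y \in finset.setX C [set: bool] -> y != x ->
    sqdist (emb a) (site x) < sqdist (emb a) (site y).
Proof.
have [aC | a_notin] := boolP (a \in C).
  exists (a, true); first by rewrite finset.in_setX aC finset.in_setT.
  split=> [|y _ ya]; first by case: (f a).
  by rewrite /= sqdist_refl sqdist_site_gt0.
have [c cC [ac1 c_uniq]] := C_cover a_notin.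
have [j aE] : exists j, a = flip c j by have [j ->] := ham_eq1 ac1; exists j; rewrite flipK.
have [near_twin near_far] := sqdist_site_neighbour c j; rewrite -aE in near_twin near_far.
exists (c, f a == f c); first by rewrite finset.in_setX cC finset.in_setT.
split=> [|[c' b']]; first by case: (f a); case: (f c).
have [-> _ | c'c] := eqVneq c' c.
  rewrite xpair_eqE eqxx /= => b'_neq.
  by have -> : b' = ~~ (f a == f c) by case: b' b'_neq; case: (f a == f c).
rewrite finset.in_setX => /andP[/= c'C _] _.
apply: (lt_le_trans near_far); apply: sqdist_site_far => /=.
rewrite ltnNge leq_eqVlt ltnS leqn0 ham_eq0; apply/norP; split.
  by apply: contra c'c => /eqP /(c_uniq _ c'C) ->.
by apply: contraNneq a_notin => ->.
Qed.

Lemma NN_le_twice_card : (NN f <= #|C| * 2)%nat.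
Proof.
rewrite -card_bool -cardsT -cardsX.
apply: (NN_le_card (p := site) (label := fun x => x.2 == f x.1)).
  by move=> x y _ _; apply: site_inj.
move=> a; have [x xS [lab_x near_x]] := nearest_site a.
by exists x => //; split=> // y yS yx; apply/dist_lt_sqdist/near_x.
Qed.

End Twins.

Lemma NN_mul_le n (f : cube n -> bool) : (0 < n)%nat -> (NN f * n <= expn 2 (n + 2))%nat.
Proof.
move=> n_gt0; set m := trunc_log 2 n.+1.
have m_le : (expn 2 m <= n.+1)%nat by apply: trunc_logP.
have m_gt : (n.+1 < expn 2 m.+1)%nat by apply: trunc_log_ltn.
pose h := @hamming_column m n.
have card_C : (#|code h| * expn 2 m <= expn 2 n)%nat.
  have := card_code (@F2_addrr m) (hamming_column_onto m_le).
  by rewrite card_mx card_Fp // mul1n.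
have cover_C : unique_cover (code h).
  apply: code_unique_cover; first exact: F2_addrr.
    exact: hamming_column_inj.
  exact: hamming_column_onto.
pose δ : R := (8 * n)%:R^-1.
have δ_gt0 : 0 < δ by rewrite invr_gt0 ltr0n muln_gt0.
have nδ_lt : n%:R * δ < 1 / 4.
  by rewrite /δ natrM invfM mulrCA mulfV ?pnatr_eq0 -?lt0n // mulr1; lra.
have := NN_le_twice_card f n_gt0 δ_gt0 nδ_lt cover_C.
rewrite expnD (expnS 2 m) in m_gt *; nia.
Qed.

Local Open Scope classical_set_scope.

Theorem theorem3 :
  exists eps : nat -> R,
    eps @ \oo --> (0 : R) /\
    forall (n : nat) (f : cube n -> bool), (0 < n)%nat ->
      (NN f)%:R <= (1 + eps n) * (2 ^+ (n + 2) / n%:R).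
Proof.
exists (fun _ => 0); split; first exact: cvg_cst.
move=> n f n_gt0; rewrite addr0 mul1r ler_pdivlMr ?ltr0n //.
by rewrite -natrM -(natrX _ 2) ler_nat NN_mul_le.
Qed.
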